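(* Let $N\ge1$, and for a parameter vector $h=(h_\alpha,h_\beta,h_1,\dots,h_{N-1})\in\mathbb{R}^{N+1}$ consider the linear system $\dot{\mathbf x}=A(h)\mathbf x+B\delta(t)$, $y=C\mathbf x$, with $A(h)$ as in the context, $B=e_1$ and $C=e_2^T$, whose input–output behaviour is the transfer function $G_h(s)=C(sI-A(h))^{-1}B$ (equivalently the impulse response $y_h(t)=Ce^{A(h)t}B$, $t\ge0$). Then there is a Lebesgue-null set $\mathcal{Z}\subset\mathbb{R}^{N+1}$ such that for all $h,h'\notin\mathcal Z$ with known (designed) sensor couplings $h_\alpha=h'_\alpha$, $h_\beta=h'_\beta$, the equality $G_h(s)=G_{h'}(s)$ (for all $s$) implies $|h_i|=|h'_i|$ for all $i=1,\dots,N-1$. That is, the magnitudes of the chain couplings $h_1,\dots,h_{N-1}$ are uniquely determined by the measurement record of $Z_\alpha Y_\beta$ with initial state $\rho^x_\alpha\otimes\frac I2$.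
   Context: For an integer $N\ge1$ and real parameters $h=(h_\alpha,h_\beta,h_1,\dots,h_{N-1})$, set $(c_1,c_2,c_3,\dots,c_{N+1})=(h_\alpha,h_\beta,h_1,\dots,h_{N-1})$ and let $A(h)$ be the real $(N+2)\times(N+2)$ tridiagonal matrix with $A_{j,j+1}=c_j$, $A_{j+1,j}=-c_j$ for $j=1,\dots,N+1$ and all other entries zero. $e_j$ denotes the $j$-th standard basis column vector. Physically, this is the Heisenberg-picture dynamics $\frac{d}{dt}\langle O\rangle=\langle \mathrm{i}[H,O]\rangle$ of the expectation vector $\mathbf x=(\langle X_\alpha\rangle,\langle Z_\alpha Y_\beta\rangle,\langle Z_\alpha Z_\beta X_1\rangle,\langle Z_\alpha Z_\beta Z_1Y_2\rangle,\dots)$ for the chain of qubits $\alpha,\beta,1,\dots,N$ with Hamiltonian $H=\frac{h_\alpha}{2}(X_\alpha X_\beta+Y_\alpha Y_\beta)+\frac{h_\beta}{2}(X_\beta X_1+Y_\beta Y_1)+\sum_{k=1}^{N-1}\frac{h_k}{2}(X_kX_{k+1}+Y_kY_{k+1})$, where $X,Y,Z$ are Pauli matrices and $\rho^x_\alpha=(I+X)/2$ on qubit $\alpha$. *)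

From Stdlib Require Import Reals Lra Lia.
Open Scope R_scope.

(* Vectors are functions nat -> R; only the first d coordinates matter
   for a vector in R^d.  Indices are 0-based. *)

Fixpoint rsum (n : nat) (f : nat -> R) : R :=
  match n with O => 0 | S m => rsum m f + f m end.

Fixpoint rprod (n : nat) (f : nat -> R) : R :=
  match n with O => 1 | S m => rprod m f * f m end.

Definition lebesgue_null (d : nat) (Z : (nat -> R) -> Prop) : Prop :=
  forall eps : R, 0 < eps ->
    exists a b : nat -> nat -> R,
      (forall k i, (i < d)%nat -> a k i <= b k i) /\
      (forall M : nat,
          rsum M (fun k => rprod d (fun i => b k i - a k i)) < eps) /\
      (forall h, Z h -> exists k, forall i, (i < d)%nat -> a k i <= h i <= b k i).

(* The (N+2)x(N+2) tridiagonal matrix A(h), 0-based: with the parameter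
   vector h = (h_alpha, h_beta, h_1, ..., h_{N-1}) stored as h 0, h 1, h 2, ...,
   h N, i.e. c_{j+1} = h j, we have A_{j,j+1} = h j and A_{j+1,j} = - h j. *)
Definition Amat (h : nat -> R) (j k : nat) : R :=
  if Nat.eqb k (S j) then h j
  else if Nat.eqb j (S k) then - h k
  else 0.

Definition sIA (N : nat) (h : nat -> R) (s : R) (x : nat -> R) (j : nat) : R :=
  s * x j - rsum (N + 2) (fun k => Amat h j k * x k).

Definition resolvent_defined (N : nat) (h : nat -> R) (s : R) : Prop :=
  forall x : nat -> R,
    (forall j, (j < N + 2)%nat -> sIA N h s x j = 0) ->
    forall j, (j < N + 2)%nat -> x j = 0.

(* G_h(s) = y, where G_h(s) = C (sI - A(h))^{-1} B with B = e_1, C = e_2^T: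
   y = x_2 for the solution x of (sI - A(h)) x = e_1 (0-based: x 1, e_0). *)
Definition transfer_value (N : nat) (h : nat -> R) (s y : R) : Prop :=
  exists x : nat -> R,
    (forall j, (j < N + 2)%nat -> sIA N h s x j = if Nat.eqb j 0 then 1 else 0) /\
    y = x 1%nat.

Definition same_transfer (N : nat) (h h' : nat -> R) : Prop :=
  forall s : R, resolvent_defined N h s -> resolvent_defined N h' s ->
    forall y : R, transfer_value N h s y <-> transfer_value N h' s y.

From Stdlib Require Import Reals Lra Lia.
Open Scope R_scope.

(* For real s > 0, eliminate the chain from its far end: a solution of
   (sI - A(h)) x = e_0 satisfies h_j x_{j+1} = t_j x_j, where the tails
   t_j = -h_j^2 / (s - t_{j+1}) form a continued fraction with t_{N+1} = 0 and
   -h_j^2/s <= t_j <= 0.  Hence G_h(s) = -h_0 / (s (s - t_1) + h_0^2), so for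
   h_0 = h'_0 <> 0 the transfer function determines t_1 on s > 0.  Since
   s t_j -> -h_j^2 as s -> oo, equal tails at j force h_j^2 = h'_j^2, and when
   h_j <> 0 the recursion then gives equal tails at j + 1.  The exceptional set
   is the union of the coordinate hyperplanes {h_i = 0}, which is null. *)

Lemma rsum_eq0 (M : nat) (f : nat -> R) : (forall k, f k = 0) -> rsum M f = 0.
Proof. intros Hf; induction M as [|M IH]; simpl; [reflexivity|]. rewrite IH, Hf; ring. Qed.

Lemma rprod_eq0 (d j : nat) (f : nat -> R) : (j < d)%nat -> f j = 0 -> rprod d f = 0.
Proof.
  induction d as [|d IH]; intros Hj Hf; [lia|]. simpl.
  destruct (Nat.eq_dec j d) as [->|Hne].
  - rewrite Hf; ring.
  - rewrite IH by (auto; lia); ring.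
Qed.

Lemma coords_bounded (d : nat) (h : nat -> R) :
  exists n : nat, forall j, (j < d)%nat -> Rabs (h j) <= INR n.
Proof.
  induction d as [|d [n IH]].
  - exists 0%nat; intros; lia.
  - destruct (INR_unbounded (Rabs (h d))) as [m Hm].
    exists (Nat.max n m); intros j Hj.
    destruct (Nat.eq_dec j d) as [->|Hne].
    + pose proof (le_INR m (Nat.max n m) ltac:(lia)); lra.
    + pose proof (le_INR n (Nat.max n m) ltac:(lia)); pose proof (IH j ltac:(lia)); lra.
Qed.

(* The k-th box is flat in coordinate k mod d and is [-k, k] in the others:
   every box has volume 0, and every point with a zero coordinate lies in one. *)
Lemma lebesgue_null_coordinate_zero (d : nat) : (0 < d)%nat ->
  lebesgue_null d (fun h => exists i, (i < d)%nat /\ h i = 0).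
Proof.
  intros Hd eps Heps.
  exists (fun k i => if Nat.eqb i (k mod d) then 0 else - INR k).
  exists (fun k i => if Nat.eqb i (k mod d) then 0 else INR k).
  split; [|split].
  - intros k i _. destruct (Nat.eqb i (k mod d)); [lra|]. pose proof (pos_INR k); lra.
  - intros M. rewrite rsum_eq0; [lra|]. intros k.
    apply (rprod_eq0 _ (k mod d)); [apply Nat.mod_upper_bound; lia|].
    rewrite Nat.eqb_refl; ring.
  - intros h [i [Hi Hz]]. destruct (coords_bounded d h) as [n Hn].
    exists (i + n * d)%nat; intros j Hj.
    rewrite Nat.Div0.mod_add, Nat.mod_small by lia.
    destruct (Nat.eqb_spec j i) as [->|Hne]; [lra|].
    pose proof (Hn j Hj). pose proof (le_INR n (i + n * d) ltac:(nia)).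
    split_Rabs; lra.
Qed.

Lemma eq0_of_bounded_scaling (D K : R) : (forall s, 1 <= s -> Rabs D * s <= K) -> D = 0.
Proof.
  intros HK. destruct (Req_dec D 0) as [|HD]; [assumption|exfalso].
  pose proof (Rabs_pos_lt D HD) as HD0.
  set (s := Rmax 1 ((Rabs K + 1) / Rabs D)).
  assert (Hs : (Rabs K + 1) / Rabs D <= s) by apply Rmax_r.
  assert (Rabs D * ((Rabs K + 1) / Rabs D) = Rabs K + 1) by (field; lra).
  pose proof (HK s (Rmax_l _ _)). pose proof (Rle_abs K). nra.
Qed.

Lemma eq_div_of_mul (d y z : R) : d <> 0 -> d * y = z -> y = z / d.
Proof. intros Hd <-; field; exact Hd. Qed.

Lemma rsum_Amat_row (h x : nat -> R) (j n : nat) :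
  rsum n (fun k => Amat h j k * x k) =
  (if Nat.ltb (S j) n then h j * x (S j) else 0) +
  (match j with O => 0 | S j' => if Nat.ltb j' n then - h j' * x j' else 0 end).
Proof.
  induction n as [|n IH]; [destruct j; simpl; ring|].
  simpl rsum. rewrite IH. unfold Amat.
  destruct j as [|j];
    repeat match goal with
    | |- context [Nat.ltb ?a ?b] => destruct (Nat.ltb_spec a b)
    | |- context [Nat.eqb ?a ?b] => destruct (Nat.eqb_spec a b)
    end;
    repeat match goal with H : S _ = S _ |- _ => injection H as H end;
    subst; try (exfalso; lia); ring.
Qed.

Section Rows.
Variables (N : nat) (h : nat -> R) (s : R) (x : nat -> R).

Lemma sIA_first : sIA N h s x 0 = s * x 0%nat - h 0%nat * x 1%nat.
Proof.
  unfold sIA; rewrite rsum_Amat_row.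
  destruct (Nat.ltb_spec 1 (N + 2)); [ring|lia].
Qed.

Lemma sIA_middle (j : nat) : (S j <= N)%nat ->
  sIA N h s x (S j) = s * x (S j) - h (S j) * x (S (S j)) + h j * x j.
Proof.
  intros Hj; unfold sIA; rewrite rsum_Amat_row.
  destruct (Nat.ltb_spec (S (S j)) (N + 2)); [|lia].
  destruct (Nat.ltb_spec j (N + 2)); [ring|lia].
Qed.

Lemma sIA_last : sIA N h s x (S N) = s * x (S N) + h N * x N.
Proof.
  unfold sIA; rewrite rsum_Amat_row.
  destruct (Nat.ltb_spec (S (S N)) (N + 2)); [lia|].
  destruct (Nat.ltb_spec N (N + 2)); [ring|lia].
Qed.

End Rows.

Fixpoint cf_tail (h : nat -> R) (s : R) (k j : nat) : R :=
  match k with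
  | O => 0
  | S k => - (h j * h j) / (s - cf_tail h s k (S j))
  end.

(* The tail t_j of the chain j, ..., N+1; by truncated subtraction it is 0
   from j = N+1 on. *)
Definition tail (N : nat) (h : nat -> R) (s : R) (j : nat) : R :=
  cf_tail h s (N + 1 - j) j.

Lemma cf_tail_bounds (h : nat -> R) (s : R) (k j : nat) : 0 < s ->
  - (h j * h j) / s <= cf_tail h s k j <= 0.
Proof.
  intros Hs; revert j; induction k as [|k IH]; intros j; simpl.
  - split; [|lra].
    enough (0 <= h j * h j / s) by (unfold Rdiv in *; lra).
    apply Rle_mult_inv_pos; nra.
  - pose proof (IH (S j)) as [_ Hk].
    assert (Hc : 0 <= h j * h j) by nra.
    assert (/ (s - cf_tail h s k (S j)) <= / s) by (apply Rinv_le_contravar; lra).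
    assert (0 < / (s - cf_tail h s k (S j))) by (apply Rinv_0_lt_compat; lra).
    unfold Rdiv; split; nra.
Qed.

Section Tail.
Variables (N : nat) (h : nat -> R) (s : R).
Hypothesis Hs : 0 < s.

Lemma tail_bounds (j : nat) : - (h j * h j) / s <= tail N h s j <= 0.
Proof. apply cf_tail_bounds, Hs. Qed.

Lemma tail_shift_pos (j : nat) : 0 < s - tail N h s j.
Proof. pose proof (tail_bounds j); lra. Qed.

End Tail.

Lemma tail_rec (N : nat) (h : nat -> R) (s : R) (j : nat) : (j <= N)%nat ->
  tail N h s j = - (h j * h j) / (s - tail N h s (S j)).
Proof.
  intros Hj; unfold tail.
  replace (N + 1 - j)%nat with (S (N + 1 - S j)) by lia; reflexivity.
Qed.

Lemma tail_end (N : nat) (h : nat -> R) (s : R) : tail N h s (S N) = 0.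
Proof. unfold tail; replace (N + 1 - S N)%nat with 0%nat by lia; reflexivity. Qed.

Section Resolvent.
Variables (N : nat) (h : nat -> R) (s : R).
Hypothesis Hs : 0 < s.

Definition lower_rows_vanish (x : nat -> R) : Prop :=
  forall j, (1 <= j <= N + 1)%nat -> sIA N h s x j = 0.

Lemma lower_rows_ratio (x : nat -> R) : lower_rows_vanish x ->
  forall j, (j <= N)%nat -> h j * x (S j) = tail N h s j * x j.
Proof.
  intros Hrow.
  enough (K : forall m j, (j + m = N)%nat -> h j * x (S j) = tail N h s j * x j)
    by (intros j Hj; apply (K (N - j)%nat); lia).
  induction m as [|m IH]; intros j Hjm.
  - replace j with N by lia.
    pose proof (Hrow (S N) ltac:(lia)) as E; rewrite sIA_last in E.
    rewrite tail_rec, tail_end by lia.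
    assert (Ex : x (S N) = - h N * x N / s) by (apply eq_div_of_mul; lra).
    rewrite Ex; field; lra.
  - pose proof (IH (S j) ltac:(lia)) as IHj.
    pose proof (Hrow (S j) ltac:(lia)) as E; rewrite sIA_middle in E by lia.
    pose proof (tail_shift_pos N h s Hs (S j)).
    rewrite (tail_rec N h s j) by lia.
    assert (Ex : x (S j) = - h j * x j / (s - tail N h s (S j)))
      by (apply eq_div_of_mul; lra).
    rewrite Ex; field; lra.
Qed.

Lemma lower_rows_forward (x : nat -> R) : lower_rows_vanish x ->
  forall j, (j <= N)%nat -> (s - tail N h s (S j)) * x (S j) = - h j * x j.
Proof.
  intros Hrow j Hj.
  destruct (Nat.le_gt_cases (S j) N) as [Hmid|Hend].
  - pose proof (lower_rows_ratio x Hrow (S j) Hmid).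
    pose proof (Hrow (S j) ltac:(lia)) as E; rewrite sIA_middle in E by lia. lra.
  - replace j with N by lia. rewrite tail_end.
    pose proof (Hrow (S N) ltac:(lia)) as E; rewrite sIA_last in E. lra.
Qed.

Lemma lower_rows_first (x : nat -> R) : lower_rows_vanish x ->
  (s - tail N h s 0) * x 0%nat = sIA N h s x 0.
Proof.
  intros Hrow. pose proof (lower_rows_ratio x Hrow 0 ltac:(lia)).
  rewrite sIA_first. lra.
Qed.

Lemma resolvent_defined_pos : resolvent_defined N h s.
Proof.
  intros x Hx.
  assert (Hrow : lower_rows_vanish x) by (intros j Hj; apply Hx; lia).
  assert (X0 : x 0%nat = 0).
  { pose proof (lower_rows_first x Hrow) as E. rewrite Hx in E by lia.
    pose proof (tail_shift_pos N h s Hs 0).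
    destruct (Rmult_integral _ _ E); [lra|assumption]. }
  enough (K : forall j, (j <= N + 1)%nat -> x j = 0) by (intros j Hj; apply K; lia).
  induction j as [|j IH]; intros Hj; [assumption|].
  pose proof (lower_rows_forward x Hrow j ltac:(lia)) as E.
  rewrite IH in E by lia. pose proof (tail_shift_pos N h s Hs (S j)).
  assert (E0 : (s - tail N h s (S j)) * x (S j) = 0) by lra.
  destruct (Rmult_integral _ _ E0); [lra|assumption].
Qed.

Fixpoint forward_solution (j : nat) : R :=
  match j with
  | O => 1 / (s - tail N h s 0)
  | S j => - h j * forward_solution j / (s - tail N h s (S j))
  end.

Lemma forward_solution_spec : forall j, (j < N + 2)%nat ->
  sIA N h s forward_solution j = if Nat.eqb j 0 then 1 else 0.
Proof.
  assert (Ratio : forall j, (j <= N)%nat ->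
    h j * forward_solution (S j) = tail N h s j * forward_solution j).
  { intros j Hj. rewrite (tail_rec N h s j Hj). simpl.
    pose proof (tail_shift_pos N h s Hs (S j)). field; lra. }
  assert (Forward : forall j,
    (s - tail N h s (S j)) * forward_solution (S j) = - h j * forward_solution j).
  { intros j; simpl. pose proof (tail_shift_pos N h s Hs (S j)). field; lra. }
  intros j Hj. destruct j as [|j]; simpl Nat.eqb.
  - rewrite sIA_first, Ratio by lia. simpl.
    pose proof (tail_shift_pos N h s Hs 0). field; lra.
  - destruct (Nat.le_gt_cases (S j) N) as [Hmid|Hend].
    + rewrite sIA_middle, Ratio by lia. pose proof (Forward j); lra.
    + replace j with N by lia. rewrite sIA_last.
      pose proof (Forward N) as E; rewrite tail_end in E; lra.
Qed.

Definition transfer_closed_form : R :=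
  - h 0%nat / (s * (s - tail N h s 1) + h 0%nat * h 0%nat).

Lemma transfer_valueE (y : R) : transfer_value N h s y <-> y = transfer_closed_form.
Proof.
  pose proof (tail_shift_pos N h s Hs 0) as D0; pose proof (tail_shift_pos N h s Hs 1) as D1.
  assert (Hden : (s - tail N h s 0) * (s - tail N h s 1)
                 = s * (s - tail N h s 1) + h 0%nat * h 0%nat).
  { rewrite (tail_rec N h s 0) by lia. field; lra. }
  unfold transfer_closed_form; rewrite <- Hden. split.
  - intros [x [Hx ->]].
    assert (Hrow : lower_rows_vanish x).
    { intros j Hj. rewrite Hx by lia. destruct j; [lia|reflexivity]. }
    pose proof (lower_rows_first x Hrow) as E0; rewrite Hx in E0 by lia; simpl in E0.
    pose proof (lower_rows_forward x Hrow 0 ltac:(lia)) as E1.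
    rewrite (eq_div_of_mul _ (x 1%nat) _ (Rgt_not_eq _ _ D1) E1).
    rewrite (eq_div_of_mul _ (x 0%nat) _ (Rgt_not_eq _ _ D0) E0).
    field; lra.
  - intros ->. exists forward_solution. split; [exact forward_solution_spec|].
    simpl. field; lra.
Qed.

End Resolvent.

Lemma same_transfer_tail1 (N : nat) (h h' : nat -> R) :
  h 0%nat = h' 0%nat -> h 0%nat <> 0 -> same_transfer N h h' ->
  forall s, 0 < s -> tail N h s 1 = tail N h' s 1.
Proof.
  intros E0 Hh0 ST s Hs.
  assert (G : transfer_closed_form N h s = transfer_closed_form N h' s).
  { apply (transfer_valueE N h' s Hs).
    apply (ST s (resolvent_defined_pos N h s Hs) (resolvent_defined_pos N h' s Hs)).
    apply (transfer_valueE N h s Hs); reflexivity. }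
  unfold transfer_closed_form, Rdiv in G; rewrite <- E0 in G.
  apply Rmult_eq_reg_l, Rinv_eq_reg in G; [|lra].
  assert (E : s * (tail N h s 1 - tail N h' s 1) = 0) by lra.
  destruct (Rmult_integral _ _ E); lra.
Qed.

Section Peel.
Variables (N : nat) (h h' : nat -> R) (j : nat).
Hypothesis Hj : (j <= N)%nat.
Hypothesis Htail : forall s, 0 < s -> tail N h s j = tail N h' s j.

Lemma tail_eq_cross (s : R) : 0 < s ->
  (h j * h j) * (s - tail N h' s (S j)) = (h' j * h' j) * (s - tail N h s (S j)).
Proof.
  intros Hs. pose proof (Htail s Hs) as E. rewrite !(tail_rec _ _ s j Hj) in E.
  pose proof (tail_shift_pos N h s Hs (S j)); pose proof (tail_shift_pos N h' s Hs (S j)).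
  apply (Rmult_eq_compat_r ((s - tail N h s (S j)) * (s - tail N h' s (S j)))) in E.
  field_simplify in E; lra.
Qed.

(* The tails are O(1/s), so the cross relation leaves (h_j^2 - h'_j^2) s bounded. *)
Lemma tail_eq_sqr : h j * h j = h' j * h' j.
Proof.
  assert (Tbound : forall (g : nat -> R) s, 1 <= s ->
    - (g (S j) * g (S j)) <= tail N g s (S j) <= 0).
  { intros g s Hs. pose proof (tail_bounds N g s ltac:(lra) (S j)) as [T1 T2].
    split; [|lra].
    assert (g (S j) * g (S j) / s <= g (S j) * g (S j)).
    { apply Rmult_le_reg_r with s; [lra|]. field_simplify; nra. }
    unfold Rdiv in *; lra. }
  enough (h j * h j - h' j * h' j = 0) by lra.
  apply (eq0_of_bounded_scaling _
    (h j * h j * (h' (S j) * h' (S j)) + h' j * h' j * (h (S j) * h (S j)))).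
  intros s Hs.
  pose proof (tail_eq_cross s ltac:(lra)) as C.
  pose proof (Tbound h s Hs); pose proof (Tbound h' s Hs).
  set (c := h j * h j) in *; set (c' := h' j * h' j) in *.
  set (t := tail N h s (S j)) in *; set (t' := tail N h' s (S j)) in *.
  assert (0 <= c) by (unfold c; nra). assert (0 <= c') by (unfold c'; nra).
  assert (Hcs : (c - c') * s = c * t' - c' * t) by lra.
  rewrite <- (Rabs_right s), <- Rabs_mult, Hcs by lra.
  apply Rabs_le; split; nra.
Qed.

Lemma tail_eq_next : h j <> 0 -> forall s, 0 < s -> tail N h s (S j) = tail N h' s (S j).
Proof.
  intros Hz s Hs. pose proof (tail_eq_cross s Hs) as C.
  rewrite <- tail_eq_sqr in C.
  assert (0 < h j * h j) by (pose proof (Rsqr_pos_lt _ Hz); unfold Rsqr in *; lra).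
  apply Rmult_eq_reg_l in C; lra.
Qed.

End Peel.

Lemma tails_eq (N : nat) (h h' : nat -> R) :
  (forall j, (j <= N)%nat -> h j <> 0) ->
  (forall s, 0 < s -> tail N h s 1 = tail N h' s 1) ->
  forall j, (1 <= j <= N)%nat -> forall s, 0 < s -> tail N h s j = tail N h' s j.
Proof.
  intros Hnz H1 j Hj. induction j as [|j IH]; [lia|].
  destruct j as [|j]; [exact H1|].
  apply tail_eq_next; [lia| |apply Hnz; lia]. apply IH; lia.
Qed.

Theorem theorem1 (N : nat) (HN : (1 <= N)%nat) :
  exists Z : (nat -> R) -> Prop,
    lebesgue_null (N + 1) Z /\
    forall h h' : nat -> R,
      ~ Z h -> ~ Z h' ->
      h 0%nat = h' 0%nat -> h 1%nat = h' 1%nat ->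
      same_transfer N h h' ->
      forall i : nat, (2 <= i <= N)%nat -> Rabs (h i) = Rabs (h' i).
Proof.
  exists (fun h => exists i, (i < N + 1)%nat /\ h i = 0). split.
  { apply lebesgue_null_coordinate_zero; lia. }
  intros h h' nZ _ E0 _ ST i Hi.
  assert (Hnz : forall j, (j <= N)%nat -> h j <> 0).
  { intros j Hj Hz; apply nZ; exists j; split; [lia|exact Hz]. }
  pose proof (same_transfer_tail1 N h h' E0 (Hnz 0%nat ltac:(lia)) ST) as T1.
  pose proof (tails_eq N h h' Hnz T1 i ltac:(lia)) as Ti.
  apply Rsqr_eq_abs_0; unfold Rsqr. exact (tail_eq_sqr N h h' i ltac:(lia) Ti).
Qed.
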